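(* For all $i \in \mathbb{N}$ and all $t \geq 0$, at most $((1+\alpha)^i - 1)N(t)$ nodes enter during $(t, t+Di]$ and $(1-\alpha)^i N(t) \leq N(t+Di) \leq (1+\alpha)^i N(t)$.
   Context: Consider an asynchronous message-passing system whose composition changes over time. An adversary generates, for each node $p$, at most one Enter($p$) signal and at most one Leave($p$) signal (a Leave($p$) signal for a crashed node $p$ may be generated at another active node; such forced leaves also count as leaves). A node is present at time $t$ if it has entered but not left by time $t$; $N(t)$ denotes the number of nodes present at time $t$. $D$ is an upper bound (unknown to the nodes) on message delay. Churn assumption: there is a constant $\alpha < 1$ (the churn rate) such that for every time $t$, the total number of nodes that enter or leave during $[t, t+D]$ is at most $\alpha N(t)$. *)

From Stdlib Require Import Reals Lra Lia List.
Open Scope R_scope.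

Section Churn.
Variable T : Type.

(* enter p = Some e : the (unique) Enter(p) signal occurs at time e;
   None : no Enter(p) signal is ever generated. Same for leave. *)

Definition present (enter leave : T -> option R) (t : R) (p : T) : Prop :=
  (exists e, enter p = Some e /\ e <= t) /\
  ~ (exists l, leave p = Some l /\ l <= t).

Definition occurs_in_closed (s : option R) (a b : R) : Prop :=
  exists x, s = Some x /\ a <= x <= b.

Definition occurs_in_Ioc (s : option R) (a b : R) : Prop :=
  exists x, s = Some x /\ a < x <= b.

Definition at_most (P : T -> Prop) (k : R) : Prop :=
  forall l : list T, NoDup l -> Forall P l -> INR (length l) <= k.

Definition is_count (P : T -> Prop) (n : nat) : Prop :=
  exists l : list T, NoDup l /\ (forall x, P x <-> In x l) /\ length l = n.

End Churn.

Arguments present {T}.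
Arguments at_most {T}.
Arguments is_count {T}.

From Stdlib Require Import Reals List.
From Stdlib Require Import Lra Classical ClassicalDescription.
Open Scope R_scope.

(* Every node present at a later time s was either present at t or entered during (t, s],
   so N(s) <= N(t) + #enters(t, s]; iterating the churn bound over the windows
   [t + D j, t + D (j+1)] gives #enters(t, t + D i] <= ((1+alpha)^i - 1) N(t), hence the upper
   bound. Conversely every node present at t is still present at t + D unless it left in
   [t, t + D], so N(t + D) >= (1 - alpha) N(t), and the lower bound follows by induction. *)

Section Counting.
Context {T : Type}.
Implicit Types (P A B : T -> Prop) (k a b : R).

Lemma at_most_nonneg P k : at_most P k -> 0 <= k.
Proof. intros H. exact (H nil (NoDup_nil _) (Forall_nil _)). Qed.

Lemma at_most_empty P k : (forall x, ~ P x) -> 0 <= k -> at_most P k.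
Proof.
  intros HP Hk [|x l] _ Hl; [exact Hk|].
  inversion Hl; exfalso; eapply HP; eassumption.
Qed.

Lemma at_most_le P k k' : k <= k' -> at_most P k -> at_most P k'.
Proof. intros Hk HP l Hnd Hl. specialize (HP l Hnd Hl). lra. Qed.

Lemma at_most_union P A B a b :
  (forall x, P x -> A x \/ B x) -> at_most A a -> at_most B b -> at_most P (a + b).
Proof.
  intros HP HA HB l Hnd Hl.
  set (inA x := if excluded_middle_informative (A x) then true else false).
  rewrite <- (filter_length inA l), plus_INR.
  rewrite Forall_forall in Hl.
  apply Rplus_le_compat; [apply HA | apply HB]; try now apply NoDup_filter.
  all: apply Forall_forall; intros x Hx; apply filter_In in Hx as [Hxl HxA].
  all: unfold inA in HxA; destruct excluded_middle_informative as [HAx|HAx];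
       simpl in HxA; try discriminate.
  - exact HAx.
  - destruct (HP x (Hl x Hxl)); tauto.
Qed.

Lemma at_most_of_is_count P n : is_count P n -> at_most P (INR n).
Proof.
  intros (lP & Hnd & HP & <-) l Hl Hf. apply le_INR, NoDup_incl_length; [exact Hl|].
  intros x Hx. apply HP. rewrite Forall_forall in Hf. auto.
Qed.

Lemma is_count_le P n k : is_count P n -> at_most P k -> INR n <= k.
Proof.
  intros (lP & Hnd & HP & <-) H. apply H; [exact Hnd|].
  apply Forall_forall. intros x. apply HP.
Qed.

End Counting.

Section Presence.
Context {T : Type} (enter leave : T -> option R).

Lemma present_later t s p : t <= s -> present enter leave s p ->
  present enter leave t p \/ occurs_in_Ioc (enter p) t s.
Proof.
  intros Hts [[e [He Hes]] Hleft].
  destruct (Rle_dec e t) as [Het|Het].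
  - left. split; [now exists e|].
    intros [l [Hl Hlt]]. apply Hleft. exists l. split; [exact Hl | lra].
  - right. exists e. split; [exact He | lra].
Qed.

Lemma present_earlier t s p : t <= s -> present enter leave t p ->
  present enter leave s p \/ occurs_in_closed (leave p) t s.
Proof.
  intros Hts [Hin Hleft].
  destruct (classic (exists l, leave p = Some l /\ l <= s)) as [[l [Hl Hls]]|Hstay].
  - right. exists l. split; [exact Hl|]. split; [|exact Hls].
    destruct (Rle_dec l t) as [Hlt|Hlt]; [|lra].
    exfalso. apply Hleft. now exists l.
  - left. split; [|exact Hstay].
    destruct Hin as [e [He Het]]. exists e. split; [exact He | lra].
Qed.

End Presence.

Section Churn.
Variables (T : Type) (enter leave : T -> option R) (N : R -> nat) (D alpha : R).
Hypothesis HD : 0 <= D.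
Hypothesis Halpha : alpha < 1.
Hypothesis HN : forall t, 0 <= t -> is_count (present enter leave t) (N t).
Hypothesis Hchurn : forall t, 0 <= t ->
  at_most (fun p => occurs_in_closed (enter p) t (t + D) \/
                    occurs_in_closed (leave p) t (t + D))
          (alpha * INR (N t)).

Let enters t s := fun p => occurs_in_Ioc (enter p) t s.

Lemma N_le_add_enters t s k : 0 <= t -> t <= s ->
  at_most (enters t s) k -> INR (N s) <= INR (N t) + k.
Proof.
  intros Ht Hts Hk. apply (is_count_le _ _ _ (HN s ltac:(lra))).
  apply (at_most_union _ _ _ _ _ (fun p => present_later enter leave t s p Hts)); [|exact Hk].
  exact (at_most_of_is_count _ _ (HN t Ht)).
Qed.

Lemma N_step_lower t : 0 <= t -> (1 - alpha) * INR (N t) <= INR (N (t + D)).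
Proof.
  intros Ht.
  enough (INR (N t) <= INR (N (t + D)) + alpha * INR (N t)) by lra.
  apply (is_count_le _ _ _ (HN t Ht)).
  apply (at_most_union _ (present enter leave (t + D))
           (fun p => occurs_in_closed (enter p) t (t + D) \/
                     occurs_in_closed (leave p) t (t + D))).
  - intros p Hp. destruct (present_earlier enter leave t (t + D) p ltac:(lra) Hp); tauto.
  - apply at_most_of_is_count, HN. lra.
  - exact (Hchurn t Ht).
Qed.

Lemma N_eq0_of_alpha_lt0 t : alpha < 0 -> 0 <= t -> N t = 0%nat.
Proof.
  intros Hneg Ht. apply INR_eq. simpl.
  pose proof (at_most_nonneg _ _ (Hchurn t Ht)). pose proof (pos_INR (N t)). nra.
Qed.

Lemma le_shift_steps t i : t <= t + D * INR i.
Proof. pose proof (pos_INR i). nra. Qed.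

Lemma shift_steps_S t i : t + D * INR (S i) = t + D * INR i + D.
Proof. rewrite S_INR. ring. Qed.

Lemma enters_extend t s a : 0 <= s ->
  at_most (enters t s) a -> at_most (enters t (s + D)) (a + alpha * INR (N s)).
Proof.
  intros Hs Ha. refine (at_most_union _ _ _ _ _ _ Ha (Hchurn s Hs)).
  intros p [x [Hx Htx]]. destruct (Rle_dec x s).
  - left. exists x. split; [exact Hx | lra].
  - right. left. exists x. split; [exact Hx | lra].
Qed.

Lemma enters_bound i t : 0 <= t ->
  at_most (enters t (t + D * INR i)) (((1 + alpha) ^ i - 1) * INR (N t)).
Proof.
  intros Ht. induction i as [|i IH].
  - apply at_most_empty; [|simpl; lra].
    intros p [x [_ Hx]]. simpl in Hx. lra.
  - pose proof (le_shift_steps t i) as Hts.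
    assert (HNs : alpha * INR (N (t + D * INR i)) <= alpha * ((1 + alpha) ^ i * INR (N t))).
    { destruct (Rle_dec 0 alpha) as [Hpos|Hneg].
      - apply Rmult_le_compat_l; [exact Hpos|].
        pose proof (N_le_add_enters _ _ _ Ht Hts IH). lra.
      - rewrite (N_eq0_of_alpha_lt0 t), (N_eq0_of_alpha_lt0 (t + D * INR i)); simpl; lra. }
    rewrite shift_steps_S.
    assert (Hs : 0 <= t + D * INR i) by lra.
    refine (at_most_le _ _ _ _ (enters_extend _ _ _ Hs IH)). simpl. lra.
Qed.

Lemma N_upper i t : 0 <= t ->
  INR (N (t + D * INR i)) <= (1 + alpha) ^ i * INR (N t).
Proof.
  intros Ht.
  pose proof (N_le_add_enters _ _ _ Ht (le_shift_steps t i) (enters_bound i t Ht)).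
  lra.
Qed.

Lemma N_lower i t : 0 <= t ->
  (1 - alpha) ^ i * INR (N t) <= INR (N (t + D * INR i)).
Proof.
  intros Ht. induction i as [|i IH].
  - simpl. rewrite Rmult_0_r, Rplus_0_r. lra.
  - rewrite shift_steps_S. simpl. rewrite Rmult_assoc.
    pose proof (le_shift_steps t i).
    pose proof (N_step_lower (t + D * INR i) ltac:(lra)).
    pose proof (Rmult_le_compat_l (1 - alpha) _ _ ltac:(lra) IH). lra.
Qed.

End Churn.

Theorem lemma1 (T : Type) (enter leave : T -> option R) (N : R -> nat)
  (D alpha : R) (HD : 0 <= D) (Halpha : alpha < 1)
  (HN : forall t, 0 <= t -> is_count (present enter leave t) (N t))
  (Hchurn : forall t, 0 <= t ->
     at_most (fun p => occurs_in_closed (enter p) t (t + D) \/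
                       occurs_in_closed (leave p) t (t + D))
             (alpha * INR (N t))) :
  forall (i : nat) (t : R), 0 <= t ->
    at_most (fun p => occurs_in_Ioc (enter p) t (t + D * INR i))
            (((1 + alpha) ^ i - 1) * INR (N t)) /\
    (1 - alpha) ^ i * INR (N t) <= INR (N (t + D * INR i)) /\
    INR (N (t + D * INR i)) <= (1 + alpha) ^ i * INR (N t).
Proof.
  intros i t Ht. split; [|split].
  - exact (enters_bound _ _ _ _ _ _ HD HN Hchurn i t Ht).
  - exact (N_lower _ _ _ _ _ _ HD Halpha HN Hchurn i t Ht).
  - exact (N_upper _ _ _ _ _ _ HD HN Hchurn i t Ht).
Qed.
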